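(* For an oriented classical or virtual link $L$, the forbidden determinant $\det \mathcal{FM}(L)$ is an invariant of (classical and virtual) links and an invariant of link homotopy.
   Context: An oriented (classical or virtual) link with $n$ components is represented by a signed Gauss diagram: $n$ oriented circles, one per component, with arrows from over-crossing point to under-crossing point, each arrow carrying the sign $\pm1$ of its crossing; virtual links are equivalence classes of such diagrams under Gauss-diagram Reidemeister moves. Link homotopy is the equivalence relation generated by isotopy and crossing changes at crossings where a component crosses itself. The forbidden moves are: interchange two adjacent arrowheads, or two adjacent arrow tails, on a circle. Using forbidden and Reidemeister moves, a Gauss diagram can be reduced to one with no arrow having both endpoints on the same circle and in which, for each ordered pair $(j,k)$ of distinct circles, all arrows from circle $j$ to circle $k$ have the same sign. The forbidden quiver $\mathcal{FQ}(L)$ is obtained by shrinking each circle of this reduced diagram to a vertex; $m$ parallel arrows of sign $\varepsilon$ from vertex $j$ to vertex $k$ are recorded as a single arrow with integer label $\varepsilon m$. The forbidden matrix $\mathcal{FM}(L)$ is the $n\times n$ integer matrix whose $(j,k)$ entry is the label on the arrow from vertex $j$ to vertex $k$ of $\mathcal{FQ}(L)$ ($0$ if there is none), and the forbidden determinant is its determinant. *)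

From Stdlib Require Import Relations.
From mathcomp Require Import all_boot all_order all_algebra.
Set Implicit Arguments. Unset Strict Implicit. Unset Printing Implicit Defensive.
Import GRing.Theory Num.Theory.

(* An arrow endpoint: ((label of the arrow, is_head), sign is positive). *)
Definition letter := (nat * bool * bool)%type.
Definition lab (x : letter) : nat := x.1.1.
Definition hd (x : letter) : bool := x.1.2.
Definition pos (x : letter) : bool := x.2.

(* A signed Gauss diagram on n circles: circle i carries the cyclic word
   [D i] of arrow endpoints read along its orientation. *)
Definition gdiag (n : nat) := {ffun 'I_n -> seq letter}.

Section GD.
Variable n : nat.
Implicit Types D : gdiag n.

Definition all_letters D : seq letter := flatten [seq D i | i <- enum 'I_n].
Definition labels D : seq nat := [seq lab x | x <- all_letters D].

(* Well-formedness: every arrow has exactly one tail and one head, and both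
   endpoints carry the same sign. *)
Definition tails D := [seq (lab x, pos x) | x <- all_letters D & ~~ hd x].
Definition heads D := [seq (lab x, pos x) | x <- all_letters D & hd x].
Definition wf D : bool :=
  [&& uniq (map fst (tails D)), uniq (map fst (heads D)) &
      perm_eq (tails D) (heads D)].

Definition ins (i : 'I_n) (p : nat) (B : seq letter) D : gdiag n :=
  [ffun j => if j == i then take p (D j) ++ B ++ drop p (D j) else D j].

Definition orient (e : bool) (s : seq letter) := if e then s else rev s.

(* circles are cyclic *)
Definition rot_move D D' : Prop :=
  exists (i : 'I_n) (k : nat),
    D' = [ffun j => if j == i then rot k (D j) else D j].

Definition relab (f : nat -> nat) (x : letter) : letter := (f (lab x), hd x, pos x).
Definition relabel_move D D' : Prop :=
  exists f : nat -> nat, injective f /\ D' = [ffun j => map (relab f) (D j)].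

Definition R1_move D D' : Prop :=
  exists (i : 'I_n) (p l : nat) (b s : bool),
    l \notin labels D /\ D' = ins i p [:: (l, b, s); (l, ~~ b, s)] D.

Definition R2_move D D' : Prop :=
  exists (i j : 'I_n) (p q la lb : nat) (s b1 b2 : bool),
    [/\ la != lb, la \notin labels D, lb \notin labels D &
     D' = ins j q (orient b2 [:: (la, true, s); (lb, true, ~~ s)])
            (ins i p (orient b1 [:: (la, false, s); (lb, false, ~~ s)]) D)].

(* R3: modelled on three lines in the plane L1 : y = 0, L2 : x = 0,
   L3 : x + y = 1 (moved to x + y = -1), with base directions (1,0), (0,1),
   (1,-1), orientation signs e1 e2 e3 and distinct heights h1 h2 h3.
   The crossing P12 has label la, P13 label lb, P23 label lc.
   Sign convention: sign = sign of det(d_over, d_under). *)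
Definition R3_blocks (la lb lc : nat) (e1 e2 e3 : bool) (h1 h2 h3 : nat) :
    seq letter * seq letter * seq letter :=
  let s12 := (e1 == e2) == (h2 < h1) in
  let s13 := (e1 != e3) == (h3 < h1) in
  let s23 := (e2 != e3) == (h3 < h2) in
  (orient e1 [:: (la, h1 < h2, s12); (lb, h1 < h3, s13)],
   orient e2 [:: (la, h2 < h1, s12); (lc, h2 < h3, s23)],
   orient e3 [:: (lc, h3 < h2, s23); (lb, h3 < h1, s13)]).

Definition ins3 (c1 c2 c3 : 'I_n) (p1 p2 p3 : nat)
    (B : seq letter * seq letter * seq letter) D0 : gdiag n :=
  ins c3 p3 B.2 (ins c2 p2 B.1.2 (ins c1 p1 B.1.1 D0)).

Definition R3_move D D' : Prop :=
  exists (D0 : gdiag n) (c1 c2 c3 : 'I_n) (p1 p2 p3 la lb lc h1 h2 h3 : nat)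
         (e1 e2 e3 : bool),
    [/\ uniq [:: la; lb; lc], all (fun l => l \notin labels D0) [:: la; lb; lc],
        uniq [:: h1; h2; h3],
        D = ins3 c1 c2 c3 p1 p2 p3 (R3_blocks la lb lc e1 e2 e3 h1 h2 h3) D0 &
        D' = ins3 c1 c2 c3 p1 p2 p3
               (let B := R3_blocks la lb lc e1 e2 e3 h1 h2 h3 in
                (rev B.1.1, rev B.1.2, rev B.2)) D0].

Definition reid_move D D' : Prop :=
  rot_move D D' \/ relabel_move D D' \/ R1_move D D' \/ R2_move D D' \/ R3_move D D'.

Definition forbidden_move D D' : Prop :=
  exists (i : 'I_n) (u v : seq letter) (x y : letter),
    [/\ hd x = hd y, D i = u ++ x :: y :: v &
        D' = [ffun j => if j == i then u ++ y :: x :: v else D j]].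

Definition cc (l : nat) (x : letter) : letter :=
  if lab x == l then (lab x, ~~ hd x, ~~ pos x) else x.
Definition self_cc_move D D' : Prop :=
  exists (i : 'I_n) (l : nat),
    count (fun x => lab x == l) (D i) = 2 /\ D' = [ffun j => map (cc l) (D j)].

Definition restrict (R : gdiag n -> gdiag n -> Prop) D D' : Prop :=
  [/\ wf D, wf D' & R D D'].

Definition virt_equiv := clos_refl_sym_trans (gdiag n) (restrict reid_move).
Definition homotopy_equiv :=
  clos_refl_sym_trans (gdiag n)
    (restrict (fun D D' => reid_move D D' \/ self_cc_move D D')).
Definition fw_equiv :=
  clos_refl_sym_trans (gdiag n)
    (restrict (fun D D' => reid_move D D' \/ forbidden_move D D')).

Definition arrow_from D (j k : 'I_n) (l : nat) (s : bool) : bool :=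
  ((l, false, s) \in D j) && ((l, true, s) \in D k).

Definition reduced D : Prop :=
  [/\ wf D,
      forall j l s, ~~ arrow_from D j j l s &
      forall j k l1 s1 l2 s2,
        arrow_from D j k l1 s1 -> arrow_from D j k l2 s2 -> s1 = s2].

(* forbidden matrix: (j,k) entry = signed number of arrows from j to k
   (for a reduced diagram this is the label eps*m, and 0 on the diagonal) *)
Definition FM D : 'M[int]_n :=
  (\matrix_(j, k)
    \sum_(x <- D j | ~~ hd x && has (fun y => (lab y == lab x) && hd y) (D k))
      (if pos x then 1 else -1 : int))%R.

End GD.

(* For j <> k, the (j, k) entry of the forbidden matrix of a reduced diagram is
   the signed number of arrows from circle j to circle k, and the diagonal
   vanishes.  That signed count makes sense for every diagram and no move changes
   it: rotations, forbidden moves and R3 only permute the endpoints on each circle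
   (R3 reverses blocks but keeps the same arrows), relabelling is injective, R1
   adds an arrow inside one circle, R2 adds two arrows of opposite signs between
   the same circles, and a self-crossing change only touches an arrow whose label
   occurs on no other circle.  So the forbidden matrix itself is an invariant. *)

From Stdlib Require Import Relations.
From mathcomp Require Import all_boot all_order all_algebra.
From mathcomp Require Import zify.
Set Implicit Arguments. Unset Strict Implicit. Unset Printing Implicit Defensive.
Import GRing.Theory Num.Theory.

Definition cross_count (s t : seq letter) : int :=
  (\sum_(x <- s | ~~ hd x && has (fun y => (lab y == lab x) && hd y) t)
      (if pos x then 1 else -1))%R.

Definition labels_disjoint (s t : seq letter) : Prop :=
  forall x y, x \in s -> y \in t -> lab x != lab y.

Lemma cross_count_perm s s' t t' :
  perm_eq s s' -> perm_eq t t' -> cross_count s t = cross_count s' t'.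
Proof.
move=> ps pt; rewrite /cross_count (perm_big _ ps); apply: eq_bigl => x.
by rewrite (eq_has_r (perm_mem pt)).
Qed.

Lemma cross_count0s t : cross_count [::] t = 0%R.
Proof. exact: big_nil. Qed.

Lemma cross_counts0 s : cross_count s [::] = 0%R.
Proof. by rewrite /cross_count big1 // => x; rewrite andbF. Qed.

Lemma cross_count_heads s t : all hd s -> cross_count s t = 0%R.
Proof.
move=> /allP s_hd; rewrite /cross_count big_seq_cond big1 // => x.
by case/and3P=> /s_hd ->.
Qed.

Lemma cross_count_catl s1 s2 t :
  cross_count (s1 ++ s2) t = (cross_count s1 t + cross_count s2 t)%R.
Proof. exact: big_cat. Qed.

Lemma cross_count_catr s t1 t2 :
  labels_disjoint s t1 -> cross_count s (t1 ++ t2) = cross_count s t2.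
Proof.
move=> dis; rewrite /cross_count big_seq_cond [RHS]big_seq_cond.
apply: eq_bigl => x; case s_x: (x \in s) => //=; rewrite has_cat.
suff -> : has (fun y => (lab y == lab x) && hd y) t1 = false by [].
apply/hasP=> -[y t1_y /andP [/eqP xy _]].
by move: (dis x y s_x t1_y); rewrite xy eqxx.
Qed.

Lemma cross_count_cat s1 s2 t1 t2 :
  labels_disjoint s1 t2 -> labels_disjoint s2 t1 ->
  cross_count (s1 ++ s2) (t1 ++ t2) = (cross_count s1 t1 + cross_count s2 t2)%R.
Proof.
move=> dis12 dis21; rewrite cross_count_catl [cross_count s2 _]cross_count_catr //.
have t_swap : perm_eq (t1 ++ t2) (t2 ++ t1) by rewrite perm_catC.
by rewrite (cross_count_perm (perm_refl s1) t_swap) cross_count_catr.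
Qed.

Lemma cc_id l x : lab x != l -> cc l x = x.
Proof. by rewrite /cc => /negbTE ->. Qed.

Lemma lab_cc l x : lab (cc l x) = lab x.
Proof. by rewrite /cc; case: ifP. Qed.

Lemma map_cc_id l s : {in s, forall x, lab x != l} -> map (cc l) s = s.
Proof. by move=> s_l; rewrite -[RHS]map_id; apply/eq_in_map => x /s_l /cc_id. Qed.

Lemma cross_count_map_ccl l s t :
  {in t, forall y, lab y != l} -> cross_count (map (cc l) s) t = cross_count s t.
Proof.
move=> t_l; rewrite /cross_count big_map.
have no_head x : lab x = l -> has (fun y => (lab y == lab x) && hd y) t = false.
  move=> xl; apply/hasP => -[y t_y /andP [/eqP yx _]].
  by move/eqP: (t_l y t_y); rewrite yx.
by apply: eq_big => x; rewrite lab_cc;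
  have [/no_head ->|/cc_id ->] := eqVneq (lab x) l; rewrite ?andbF.
Qed.

Lemma cross_count_map_ccr l s t :
  {in s, forall x, lab x != l} -> cross_count s (map (cc l) t) = cross_count s t.
Proof.
move=> s_l; rewrite /cross_count big_seq_cond [RHS]big_seq_cond.
apply: eq_bigl => x; case s_x: (x \in s) => //=; rewrite has_map.
congr (_ && _); apply: eq_has => y /=; rewrite lab_cc.
have [yx|] := eqVneq (lab y) (lab x); last by rewrite andFb.
by rewrite cc_id // yx s_l.
Qed.

Lemma uniq_map_inj_in (T U : eqType) (f : T -> U) (s : seq T) :
  uniq (map f s) -> {in s &, injective f}.
Proof.
elim: s => //= a s IHs /andP [fa_s us] x y; rewrite !inE.
case/predU1P=> [->|s_x] /predU1P [->|s_y] // fxy.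
- by move: fa_s; rewrite fxy map_f.
- by move: fa_s; rewrite -fxy map_f.
- exact: IHs.
Qed.

Lemma clos_rst_sub_equiv (A : Type) (R E : relation A) :
  equivalence A E -> inclusion A R E -> inclusion A (clos_refl_sym_trans A R) E.
Proof.
move=> [Erefl Etrans Esym] RE x y; elim=> [u v /RE //|u|u v _|u v w _ Euv _].
- exact: Erefl.
- exact: Esym.
- exact: Etrans.
Qed.

Section CrossCounts.
Variable n : nat.
Implicit Types D : gdiag n.

Lemma FM_E D j k : FM D j k = cross_count (D j) (D k).
Proof. by rewrite mxE. Qed.

Definition same_cross_counts D1 D2 : Prop :=
  forall j k : 'I_n, j != k -> cross_count (D1 j) (D1 k) = cross_count (D2 j) (D2 k).

Lemma same_cross_counts_equiv : equivalence (gdiag n) same_cross_counts.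
Proof.
split=> [D j k //|D1 D2 D3 E12 E23 j k jk|D1 D2 E12 j k jk].
  by rewrite E12 // E23.
by rewrite E12.
Qed.

Lemma clos_rst_same_cross_counts (R : relation (gdiag n)) :
  inclusion _ R same_cross_counts ->
  inclusion _ (clos_refl_sym_trans _ R) same_cross_counts.
Proof. exact: clos_rst_sub_equiv same_cross_counts_equiv. Qed.

Lemma same_cross_counts_perm D D' :
  (forall k, perm_eq (D k) (D' k)) -> same_cross_counts D D'.
Proof. by move=> DD' j k _; apply: cross_count_perm. Qed.

Lemma mem_all_letters D k x : x \in D k -> x \in all_letters D.
Proof. by move=> Dk_x; apply/flattenP; exists (D k); rewrite ?map_f ?mem_enum. Qed.

Lemma fresh_lab D k x l : l \notin labels D -> x \in D k -> lab x != l.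
Proof.
move=> l_fresh Dk_x; apply: contraNneq l_fresh => <-.
exact/map_f/(mem_all_letters Dk_x).
Qed.

Lemma perm_ins (i : 'I_n) p B D k :
  perm_eq (ins i p B D k) (if k == i then B ++ D k else D k).
Proof.
by rewrite ffunE; case: (k == i); rewrite // perm_catCA cat_take_drop.
Qed.

Lemma same_cross_counts_insert D D' (E : 'I_n -> seq letter) :
  (forall k, perm_eq (D' k) (E k ++ D k)) ->
  (forall k x, x \in E k -> lab x \notin labels D) ->
  (forall j k, j != k -> cross_count (E j) (E k) = 0%R) ->
  same_cross_counts D D'.
Proof.
move=> DD' E_fresh E0 j k jk.
have dis_ED m m' : labels_disjoint (E m) (D m').
  by move=> x y /E_fresh x_fresh /(fresh_lab x_fresh); rewrite eq_sym.
have dis_DE m m' : labels_disjoint (D m) (E m').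
  by move=> x y Dm_x /E_fresh y_fresh; apply: fresh_lab y_fresh Dm_x.
by rewrite (cross_count_perm (DD' j) (DD' k)) cross_count_cat // E0 // add0r.
Qed.

End CrossCounts.

Section ReidemeisterMoves.
Variable n : nat.
Implicit Types D : gdiag n.

Lemma rot_move_same D D' : rot_move D D' -> same_cross_counts D D'.
Proof.
case=> i [k ->]; apply: same_cross_counts_perm => j; rewrite ffunE.
by case: (j == i); rewrite // perm_sym perm_rot.
Qed.

Lemma forbidden_move_same D D' : forbidden_move D D' -> same_cross_counts D D'.
Proof.
case=> i [u [v [x [y [_ Di ->]]]]]; apply: same_cross_counts_perm => j.
rewrite ffunE; case: eqP => [->|//]; rewrite Di perm_cat2l.
exact/permPl/(perm_catCA [:: x] [:: y] v).
Qed.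

Lemma relabel_move_same D D' : relabel_move D D' -> same_cross_counts D D'.
Proof.
case=> f [f_inj ->] j k _; rewrite !ffunE /cross_count big_map.
apply: eq_bigl => x; rewrite has_map; congr (_ && _); apply: eq_has => y.
by rewrite /= /relab /lab /= (inj_eq f_inj).
Qed.

Lemma R1_move_same D D' : R1_move D D' -> same_cross_counts D D'.
Proof.
case=> i [p [l [b [s [l_fresh ->]]]]].
pose E k := if k == i then [:: (l, b, s); (l, ~~ b, s)] else [::].
apply: (@same_cross_counts_insert _ _ _ E).
- by move=> k; apply: perm_trans (perm_ins _ _ _ _ k) _; rewrite /E; case: ifP.
- by move=> k x; rewrite /E; case: ifP; rewrite // !inE => _ /orP [] /eqP ->.
- move=> j k jk; rewrite /E; case: (eqVneq j i) => [ji|_]; last exact: cross_count0s.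
  by rewrite -ji eq_sym (negbTE jk) cross_counts0.
Qed.

Lemma R2_move_same D D' : R2_move D D' -> same_cross_counts D D'.
Proof.
case=> i [j [p [q [la [lb [s [b1 [b2 [la_lb la_fresh lb_fresh ->]]]]]]]]].
set H := orient b2 _; set T := orient b1 _.
have orient_perm b (w : seq letter) : perm_eq (orient b w) w.
  by case: b; rewrite // perm_rev.
pose E k := (if k == j then H else [::]) ++ (if k == i then T else [::]).
have H_hd : all hd H by rewrite (perm_all _ (orient_perm _ _)).
apply: (@same_cross_counts_insert _ _ _ E).
- move=> k; apply: perm_trans (perm_ins _ _ _ _ k) _; rewrite /E -catA.
  by case: (k == j); rewrite ?perm_cat2l; apply: perm_trans (perm_ins _ _ _ _ k) _;
    case: (k == i).
- have HT_fresh x : (x \in H) || (x \in T) -> lab x \notin labels D.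
    rewrite !(perm_mem (orient_perm _ _)) !inE.
    by case/orP => /orP [] /eqP -> /=.
  move=> k x; rewrite /E mem_cat.
  by case/orP; case: ifP; rewrite ?in_nil // => _ x_in; apply: HT_fresh;
    rewrite x_in ?orbT.
- move=> a c ac; rewrite /E cross_count_catl cross_count_heads; last first.
    by case: (a == j).
  rewrite add0r; case: (eqVneq a i) => [ai|_]; last exact: cross_count0s.
  rewrite -ai [c == a]eq_sym (negbTE ac) cats0; case: (c == j); last exact: cross_counts0.
  rewrite (cross_count_perm (orient_perm _ _) (orient_perm _ _)) /cross_count.
  rewrite !big_cons big_nil /= eqxx eq_sym (negbTE la_lb) eqxx /=.
  by case: (s) => /=; rewrite addr0 ?subrr // addrC subrr.
Qed.

Lemma perm_ins_congr (c : 'I_n) p p' B B' D D' :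
  perm_eq B B' -> (forall k, perm_eq (D k) (D' k)) ->
  forall k, perm_eq (ins c p B D k) (ins c p' B' D' k).
Proof.
move=> BB' DD' k; apply: perm_trans (perm_ins c p B D k) _.
rewrite perm_sym; apply: perm_trans (perm_ins c p' B' D' k) _; rewrite perm_sym.
by case: (k == c); rewrite ?perm_cat.
Qed.

Lemma R3_move_same D D' : R3_move D D' -> same_cross_counts D D'.
Proof.
case=> D0 [c1 [c2 [c3 [p1 [p2 [p3 [la [lb [lc [h1 [h2 [h3 [e1 [e2 [e3 [_ _ _ -> ->]]]]]]]]]]]]]]]].
apply: same_cross_counts_perm.
by do 3!(apply: perm_ins_congr; first by rewrite /= perm_sym perm_rev).
Qed.

Lemma reid_move_same D D' : reid_move D D' -> same_cross_counts D D'.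
Proof.
by case=> [/rot_move_same|[/relabel_move_same|[/R1_move_same|[/R2_move_same|/R3_move_same]]]].
Qed.

End ReidemeisterMoves.

Section SelfCrossingChange.
Variable n : nat.
Implicit Types D : gdiag n.

Lemma count_all_letters D (P : pred letter) :
  count P (all_letters D) = (\sum_(m < n) count P (D m))%N.
Proof. by rewrite count_flatten sumnE -map_comp big_map big_enum. Qed.

Lemma wf_count_lab_le2 D l : wf D -> count (fun x => lab x == l) (all_letters D) <= 2.
Proof.
case/and3P=> uniq_tails uniq_heads _.
have lab_split : perm_eq (map lab (all_letters D)) (map fst (heads D) ++ map fst (tails D)).
  rewrite /heads /tails -!map_comp -map_cat perm_map // perm_sym.
  exact/permPl/perm_filterC.
rewrite -(count_map lab (pred1 l)) (permP lab_split) count_cat.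
by rewrite !count_uniq_mem // (leq_add (leq_b1 _) (leq_b1 _)).
Qed.

Lemma self_arrow_lab_other D i l k : wf D ->
  count (fun x => lab x == l) (D i) = 2 -> k != i -> {in D k, forall y, lab y != l}.
Proof.
move=> wfD Di_l ki y Dk_y; apply: contraTneq (wf_count_lab_le2 l wfD) => yl.
have Dk_l : 0 < count (fun x => lab x == l) (D k).
  by rewrite -has_count; apply/hasP; exists y; rewrite ?yl.
by rewrite count_all_letters (bigD1 i) //= (bigD1 k) //= Di_l; lia.
Qed.

Lemma self_cc_move_same D D' : wf D -> self_cc_move D D' -> same_cross_counts D D'.
Proof.
move=> wfD [i [l [Di_l ->]]] j k jk; rewrite !ffunE.
have other_l := self_arrow_lab_other wfD Di_l.
have [ji|ji] := eqVneq j i.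
  have ki : k != i by rewrite -ji eq_sym.
  by rewrite (map_cc_id (other_l k ki)) (cross_count_map_ccl _ (other_l k ki)).
by rewrite (map_cc_id (other_l j ji)) (cross_count_map_ccr _ (other_l j ji)).
Qed.

End SelfCrossingChange.

Section ForbiddenMatrix.
Variable n : nat.
Implicit Types D : gdiag n.

Lemma wf_arrow_from D j k l s s' : wf D ->
  (l, false, s) \in D j -> (l, true, s') \in D k -> arrow_from D j k l s.
Proof.
case/and3P=> _ uniq_heads tails_heads Dj_tail Dk_head.
have tail_ls : (l, s) \in heads D.
  rewrite -(perm_mem tails_heads); apply/mapP; exists (l, false, s) => //.
  by rewrite mem_filter (mem_all_letters Dj_tail).
have head_ls' : (l, s') \in heads D.
  by apply/mapP; exists (l, true, s') => //; rewrite mem_filter (mem_all_letters Dk_head).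
case: (uniq_map_inj_in uniq_heads tail_ls head_ls' erefl) => ss'.
by rewrite /arrow_from Dj_tail ss' Dk_head.
Qed.

Lemma reduced_cross_count_diag D j : reduced D -> cross_count (D j) (D j) = 0%R.
Proof.
case=> wfD no_loop _; rewrite /cross_count big_seq_cond big1 // => -[[l h] s].
case/and3P=> Dj_x h_tail /hasP [[[l' h'] s'] Dj_y /andP [/eqP l'l h_head]].
move: l'l h_tail h_head Dj_x Dj_y; rewrite /lab /hd /= => -> /negbTE -> -> Dj_x Dj_y.
by move/negP: (no_loop j l s); rewrite (wf_arrow_from wfD Dj_x Dj_y).
Qed.

Lemma fw_equiv_same D D' : fw_equiv D D' -> same_cross_counts D D'.
Proof.
apply: clos_rst_same_cross_counts => D1 D2 [_ _].
by case=> [/reid_move_same|/forbidden_move_same].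
Qed.

Lemma virt_equiv_same D D' : virt_equiv D D' -> same_cross_counts D D'.
Proof. by apply: clos_rst_same_cross_counts => D1 D2 [_ _ /reid_move_same]. Qed.

Lemma homotopy_equiv_same D D' : homotopy_equiv D D' -> same_cross_counts D D'.
Proof.
apply: clos_rst_same_cross_counts => D1 D2 [wfD1 _].
by case=> [/reid_move_same|/(self_cc_move_same wfD1)].
Qed.

Lemma FM_reduced_eq D1 D2 R1 R2 : same_cross_counts D1 D2 ->
  fw_equiv D1 R1 -> reduced R1 -> fw_equiv D2 R2 -> reduced R2 -> FM R1 = FM R2.
Proof.
move=> D12 /fw_equiv_same D1R1 redR1 /fw_equiv_same D2R2 redR2.
apply/matrixP => j k; rewrite !FM_E.
have [<-|jk] := eqVneq j k; first by rewrite !reduced_cross_count_diag.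
have [_ R_trans R_sym] := same_cross_counts_equiv n.
exact: R_trans (R_sym _ _ D1R1) (R_trans _ _ _ D12 D2R2) j k jk.
Qed.

End ForbiddenMatrix.

Theorem mainTheorem4 (n : nat) :
  (forall D1 D2 R1 R2 : gdiag n,
      wf D1 -> wf D2 -> virt_equiv D1 D2 ->
      fw_equiv D1 R1 -> reduced R1 -> fw_equiv D2 R2 -> reduced R2 ->
      (\det (FM R1) = \det (FM R2))%R) /\
  (forall D1 D2 R1 R2 : gdiag n,
      wf D1 -> wf D2 -> homotopy_equiv D1 D2 ->
      fw_equiv D1 R1 -> reduced R1 -> fw_equiv D2 R2 -> reduced R2 ->
      (\det (FM R1) = \det (FM R2))%R).
Proof.
split=> D1 D2 R1 R2 _ _ D12 D1R1 redR1 D2R2 redR2.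
  by rewrite (FM_reduced_eq (virt_equiv_same D12) D1R1 redR1 D2R2 redR2).
by rewrite (FM_reduced_eq (homotopy_equiv_same D12) D1R1 redR1 D2R2 redR2).
Qed.
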